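(* Let $k,n,t$ be positive integers. If $\pi$ is chosen uniformly at random from $NC^k(n)$, the expected number of blocks of $\pi$ of size $tk$ is $$\frac{(nk+1)\binom{n(k+1)-t-1}{nk-1}}{\binom{(k+1)n}{n}}.$$
   Context: A partition $\pi$ of $[N]=\{1,\dots,N\}$ is non-crossing if there are no $1\le a<b<c<d\le N$ with $a,c$ in one block and $b,d$ in another. $NC^k(n)$ is the set of non-crossing partitions of $[kn]$ all of whose blocks have size divisible by $k$. $\binom{a}{b}=\frac{a!}{b!(a-b)!}$ if $0\le b\le a$ and $0$ otherwise. *)

From HB Require Import structures.
From mathcomp Require Import all_boot all_order all_algebra.
Set Implicit Arguments. Unset Strict Implicit. Unset Printing Implicit Defensive.
Import Order.TTheory GRing.Theory Num.Theory.

(* The ground set [N] = {1,...,N} is represented by 'I_N = {0,...,N-1},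
   with the order-preserving bijection i <-> i+1. *)

Definition is_set_partition (N : nat) (P : {set {set 'I_N}}) : bool :=
  partition P [set: 'I_N].

Definition noncrossing (N : nat) (P : {set {set 'I_N}}) : bool :=
  [forall B1 in P, forall B2 in P, (B1 != B2) ==>
     [forall a : 'I_N, forall b : 'I_N, forall c : 'I_N, forall d : 'I_N,
        ~~ [&& (a < b)%N, (b < c)%N, (c < d)%N,
               a \in B1, c \in B1, b \in B2 & d \in B2]]].

Definition NCk (k n : nat) : {set {set {set 'I_(k * n)}}} :=
  [set P | [&& is_set_partition P, noncrossing P &
              [forall B in P, k %| #|B|]]].

Definition nblocks_of_size (N m : nat) (P : {set {set 'I_N}}) : nat :=
  #|[set B in P | #|B| == m]|.

Definition binomZ (a b : int) : nat :=
  if (0 <= b)%R && (b <= a)%R then 'C(`|a|%N, `|b|%N) else 0.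

From HB Require Import structures.
From mathcomp Require Import all_boot all_order all_algebra zify ring.
Import Order.TTheory GRing.Theory Num.Theory.
Set Implicit Arguments. Unset Strict Implicit. Unset Printing Implicit Defensive.

(* Encode a partition in NC^k(n) by the sequence c_0, ..., c_{kn} where k c_j
   is the size of the block whose least element is j (0 if j is not a least
   element, and c_{kn} = 0).  These codes are exactly the sequences with
   entries summing to n that satisfy the ballot condition
   m <= k (c_0 + ... + c_{m-1}) for all m <= kn: the partition is rebuilt by
   putting each element into the last block opened before it that is not yet
   full, and the result is automatically non-crossing.  By the cycle lemma,
   every sequence of kn + 1 entries summing to n has exactly one ballot cyclic
   rotation, so summing a rotation-invariant statistic over NC^k(n) gives
   1/(kn + 1) of its sum over all weak compositions of n into kn + 1 parts.
   The number of blocks of size tk is the number of entries equal to t, whose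
   sum over all compositions is kn + 1 times the number C(n - t + kn - 1, n - t)
   of compositions starting with t; the constant statistic 1 gives
   #NC^k(n) = C((k + 1) n, n) / (kn + 1). *)

(** * Weak compositions with bounded parts *)

Definition ffun_cons (T : Type) (M : nat) (a : T) (g : {ffun 'I_M -> T}) :
  {ffun 'I_M.+1 -> T} :=
  [ffun i => if unlift ord0 i is Some j then g j else a].

Lemma big_ffun_cons (T : finType) (M : nat) (F : {ffun 'I_M.+1 -> T} -> nat) :
  \sum_(f : {ffun 'I_M.+1 -> T}) F f =
  \sum_(a : T) \sum_(g : {ffun 'I_M -> T}) F (ffun_cons a g).
Proof.
rewrite pair_big /=.
pose cons (p : T * {ffun 'I_M -> T}) := ffun_cons p.1 p.2.
pose uncons (f : {ffun 'I_M.+1 -> T}) := (f ord0, [ffun j => f (lift ord0 j)]).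
have consK : cancel uncons cons.
  move=> f; apply/ffunP => i; rewrite /cons /uncons /ffun_cons !ffunE /=.
  by case: unliftP => [j ->|->]; rewrite ?ffunE.
have unconsK : cancel cons uncons.
  move=> [a g]; rewrite /cons /uncons /ffun_cons /= ffunE unlift_none; congr pair.
  by apply/ffunP => j; rewrite !ffunE liftK.
by rewrite (reindex cons) //; exists uncons => ? _; [exact: unconsK | exact: consK].
Qed.

Lemma sum_ffun_cons (M B : nat) (a : 'I_B) (g : {ffun 'I_M -> 'I_B}) :
  \sum_(i < M.+1) (ffun_cons a g i : nat) = a + \sum_(i < M) (g i : nat).
Proof.
rewrite big_ord_recl /ffun_cons ffunE unlift_none; congr addn.
by apply: eq_bigr => j _; rewrite ffunE liftK.
Qed.

Definition ncomp (B M m : nat) : nat :=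
  \sum_(c : {ffun 'I_M -> 'I_B}) (\sum_(i < M) (c i : nat) == m).

Lemma ncomp0 B m : ncomp B 0 m = (m == 0).
Proof.
rewrite /ncomp (eq_bigr (fun _ => (0 == m) : nat)) => [|c _]; last by rewrite big_ord0.
by rewrite sum_nat_const card_ffun !card_ord expn0 mul1n; case: m.
Qed.

Lemma ncompS B M m :
  ncomp B M.+1 m = \sum_(a < B) (a <= m) * ncomp B M (m - a).
Proof.
rewrite /ncomp big_ffun_cons; apply: eq_bigr => a _.
rewrite big_distrr /=; apply: eq_bigr => g _; rewrite sum_ffun_cons.
case: (leqP a m) => ham /=; last by rewrite mul0n; apply/eqP; rewrite eqb0; lia.
by rewrite mul1n; congr nat_of_bool; apply/eqP/eqP; lia.
Qed.

Lemma sum_bin_diag M m :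
  \sum_(a < m.+1) 'C(m - a + M, m - a) = 'C(m + M.+1, m).
Proof.
elim: m => [|m IHm]; first by rewrite big_ord1 !bin0.
rewrite big_ord_recl subn0.
rewrite (eq_bigr (fun a : 'I_m.+1 => 'C(m - a + M, m - a))) => [|a _]; last first.
  by rewrite /bump /= subSS.
by rewrite IHm -addSnnS addnS binS addnC.
Qed.

Lemma sum_leq_ord B m (G : nat -> nat) : m < B ->
  \sum_(a < B) (a <= m) * G a = \sum_(a < m.+1) G a.
Proof.
move=> ltmB; rewrite (big_ord_widen _ G ltmB) [RHS]big_mkcond /=.
by apply: eq_bigr => a _; rewrite ltnS; case: (a <= m); rewrite ?mul1n ?mul0n.
Qed.

Lemma ncomp_bin B M m : m < B -> ncomp B M.+1 m = 'C(m + M, m).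
Proof.
elim: M m => [|M IHM] m ltmB.
  rewrite ncompS (sum_leq_ord (fun a => ncomp B 0 (m - a)) ltmB) addn0 binn.
  rewrite big_ord_recr /= subnn ncomp0 /= big1 // => a _.
  by rewrite ncomp0; apply/eqP; rewrite eqb0; have := ltn_ord a; lia.
rewrite ncompS (sum_leq_ord (fun a => ncomp B M.+1 (m - a)) ltmB).
rewrite -sum_bin_diag; apply: eq_bigr => a _; rewrite IHM //; lia.
Qed.

(** * The cycle lemma *)

Definition ballot_from (V : nat -> nat) (N r : nat) : bool :=
  [forall m : 'I_N.+1, V r + m <= V (r + m)].

Lemma ltn_radix_lex (L a b x y : nat) : x < L -> y < L ->
  L * a + x <= L * b + y -> a < b \/ (a = b /\ x <= y).
Proof.
move=> ltxL ltyL; case: (ltngtP a b) => [|ltba|->] le_ab; [by left| |by right; lia].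
have : L * b.+1 <= L * a by apply: leq_mul.
by rewrite mulnS; lia.
Qed.

Section CycleLemma.

Variables (V : nat -> nat) (N : nat).
Hypothesis V_period : forall j, V (j + N.+1) = V j + N.

Lemma ballot_from_uniq r r' : r < N.+1 -> r' < N.+1 ->
  ballot_from V N r -> ballot_from V N r' -> r = r'.
Proof.
wlog le_rr' : r r' / r <= r'.
  move=> W ltr ltr' br br'; case: (leqP r r') => h; first exact: W.
  by apply/esym/W => //; apply: ltnW.
move=> ltr ltr' /forallP br /forallP br'.
case: (ltngtP r r') le_rr' => // lt_rr' _.
have lt1 : r' - r < N.+1 by lia.
have lt2 : r + N.+1 - r' < N.+1 by lia.
have := br (Ordinal lt1); have := br' (Ordinal lt2); rewrite /=.
have -> : r + (r' - r) = r' by lia.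
have -> : r' + (r + N.+1 - r') = r + N.+1 by lia.
rewrite V_period; lia.
Qed.

(* The start is the first index minimizing V j - j; the key encodes this
   lexicographic order, shifted by N + 1 to avoid truncated subtraction. *)
Lemma ballot_from_exists : exists2 r, r < N.+1 & ballot_from V N r.
Proof.
pose key (j : 'I_N.+1) := N.+1 * (V j + N.+1 - j) + j.
case: (@arg_minnP _ ord0 xpredT key isT) => r _ min_r.
exists r => //; apply/forallP => m.
case: (ltnP (r + m) N.+1) => ltrm.
  have := min_r (Ordinal ltrm) isT; rewrite /key /= => h.
  case: (ltn_radix_lex (ltn_ord r) ltrm h); lia.
have ltj : r + m - N.+1 < N.+1 by have := ltn_ord m; have := ltn_ord r; lia.
have := min_r (Ordinal ltj) isT; rewrite /key /= => h.
rewrite -(subnK ltrm) V_period.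
case: (ltn_radix_lex (ltn_ord r) ltj h) => [|[]]; first lia.
by move=> _ le_rj; have := ltn_ord m; lia.
Qed.

End CycleLemma.

Lemma big_nat_split (F : nat -> nat) a b :
  \sum_(0 <= i < a + b) F i = \sum_(0 <= i < a) F i + \sum_(0 <= i < b) F (i + a).
Proof.
rewrite (big_cat_nat (leq0n a) (leq_addr b a)); congr addn.
by rewrite -{1}(add0n a) big_addn addKn.
Qed.

Section Rotation.

Variables (N B : nat).
Implicit Types (c d : {ffun 'I_N.+1 -> 'I_B}) (k n r t : nat).

Definition rot_ord r (i : 'I_N.+1) : 'I_N.+1 := inord ((i + r) %% N.+1).

Definition rotf r c : {ffun 'I_N.+1 -> 'I_B} := [ffun i => c (rot_ord r i)].

Definition total c : nat := \sum_i (c i : nat).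

Definition nentries t c : nat := \sum_i ((c i : nat) == t).

Definition prefix_weight k c m : nat := \sum_(i < N.+1 | i < m) k * c i.

Definition ballot k c : bool := [forall m : 'I_N.+1, m <= prefix_weight k c m].

Definition cyc_sum k c j : nat := \sum_(0 <= i < j) k * c (inord (i %% N.+1)).

Lemma rot_ord_val r i : rot_ord r i = (i + r) %% N.+1 :> nat.
Proof. by rewrite /rot_ord inordK // ltn_pmod. Qed.

Lemma rot_ord_ord0 (i : 'I_N.+1) : rot_ord i ord0 = i.
Proof. by apply: val_inj; rewrite /= rot_ord_val add0n modn_small. Qed.

Lemma rot_ord_inj r : injective (rot_ord r).
Proof.
move=> i j /(congr1 val); rewrite /= !rot_ord_val => /eqP.
by rewrite eqn_modDr !modn_small // => /eqP /val_inj.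
Qed.

Lemma rotf_inj r : injective (rotf r).
Proof.
move=> c d /ffunP eq_cd; apply/ffunP => i.
by rewrite -(f_invF (@rot_ord_inj r) i); have := eq_cd (invF (@rot_ord_inj r) i); rewrite !ffunE.
Qed.

Lemma big_rot_ord r (F : 'I_N.+1 -> nat) : \sum_i F (rot_ord r i) = \sum_i F i.
Proof. by rewrite [RHS](reindex_inj (@rot_ord_inj r)). Qed.

Lemma total_rotf r c : total (rotf r c) = total c.
Proof.
rewrite /total -(big_rot_ord r (fun i => (c i : nat))).
by apply: eq_bigr => i _; rewrite ffunE.
Qed.

Lemma nentries_rotf t r c : nentries t (rotf r c) = nentries t c.
Proof.
rewrite /nentries -(big_rot_ord r (fun i => ((c i : nat) == t) : nat)).
by apply: eq_bigr => i _; rewrite ffunE.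
Qed.

Lemma cyc_sum_period k c j :
  cyc_sum k c (j + N.+1) = cyc_sum k c j + k * total c.
Proof.
rewrite addnC /cyc_sum big_nat_split addnC; congr addn.
  by apply: eq_bigr => i _; rewrite modnDr.
rewrite big_mkord /total big_distrr; apply: eq_bigr => i _.
by rewrite modn_small // inord_val.
Qed.

Lemma prefix_weight_rotf k c r m : m <= N.+1 ->
  prefix_weight k (rotf r c) m + cyc_sum k c r = cyc_sum k c (r + m).
Proof.
move=> le_mN; rewrite /cyc_sum big_nat_split addnC; congr addn.
rewrite /prefix_weight.
rewrite (eq_bigr (fun i : 'I_N.+1 => k * c (inord ((i + r) %% N.+1)))) => [|i _].
  by rewrite -(big_ord_widen _ (fun i => k * c (inord ((i + r) %% N.+1))) le_mN) big_mkord.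
by rewrite ffunE.
Qed.

Lemma ballot_rotf k c r : ballot k (rotf r c) = ballot_from (cyc_sum k c) N r.
Proof.
by apply/forallP/forallP => h m; have := h m;
  have := prefix_weight_rotf k c r (ltnW (ltn_ord m)); lia.
Qed.

Lemma sum_ballot_rotf k n c : total c = n -> k * n = N ->
  \sum_(r < N.+1) ballot k (rotf r c) = 1.
Proof.
move=> tot_c kn_N.
have period j : cyc_sum k c (j + N.+1) = cyc_sum k c j + N.
  by rewrite cyc_sum_period tot_c kn_N.
have [r0 ltr0 ballot_r0] := ballot_from_exists period.
rewrite (bigD1 (Ordinal ltr0)) //= ballot_rotf ballot_r0 big1 // => r ne_r.
rewrite ballot_rotf; apply/eqP; rewrite eqb0; apply/negP => ballot_r.
move: ne_r; rewrite -val_eqE /= => /eqP; apply.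
exact: (ballot_from_uniq period (ltn_ord r) ltr0 ballot_r ballot_r0).
Qed.

(* Each sequence of total [n] has exactly one ballot rotation, so summing [F]
   over the [N + 1] rotations of the ballot sequences counts every sequence of
   total [n] once. *)
Lemma sum_ballot k n (F : {ffun 'I_N.+1 -> 'I_B} -> nat) :
  (forall r c, F (rotf r c) = F c) -> k * n = N ->
  N.+1 * \sum_(c | (total c == n) && ballot k c) F c = \sum_(c | total c == n) F c.
Proof.
move=> F_rot kn_N.
transitivity (\sum_(r < N.+1) \sum_(c | total c == n) ballot k (rotf r c) * F c).
  rewrite -[X in X * _](card_ord N.+1) -sum_nat_const; apply: eq_bigr => r _.
  rewrite (reindex_inj (@rotf_inj r)) /= big_mkcondr /=.
  apply: eq_big => [c|c _]; first by rewrite total_rotf.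
  by rewrite F_rot; case: ballot; rewrite ?mul1n ?mul0n.
rewrite exchange_big /=; apply: eq_bigr => c /eqP tot_c.
by rewrite -big_distrl /= (sum_ballot_rotf tot_c kn_N) mul1n.
Qed.

Lemma sum_nentries t n :
  \sum_(c | total c == n) nentries t c =
  N.+1 * \sum_(c | total c == n) ((c ord0 : nat) == t).
Proof.
rewrite /nentries exchange_big /= -[X in X * _](card_ord N.+1) -sum_nat_const.
apply: eq_bigr => i _; rewrite [RHS](reindex_inj (@rotf_inj i)) /=.
apply: eq_big => [c|c _]; first by rewrite total_rotf.
by rewrite ffunE rot_ord_ord0.
Qed.

End Rotation.

Lemma sum_head_eq t n N :
  \sum_(c : {ffun 'I_N.+1 -> 'I_n.+1} | total c == n) ((c ord0 : nat) == t) =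
  if t <= n then ncomp n.+1 N (n - t) else 0.
Proof.
rewrite big_mkcond /= big_ffun_cons.
have cons_term a g : (if total (ffun_cons a g) == n then
      ((ffun_cons a g ord0 : nat) == t) : nat else 0)
    = ((a + \sum_i (g i : nat) == n) && ((a : nat) == t)).
  by rewrite /total sum_ffun_cons /ffun_cons ffunE unlift_none; case: (_ == n).
under eq_bigr do under eq_bigr do rewrite cons_term.
case: (leqP t n) => [le_tn|lt_nt]; last first.
  rewrite big1 // => a _; rewrite big1 // => g _.
  have -> : ((a : nat) == t) = false by apply/eqP => eq_at; have := ltn_ord a; lia.
  by rewrite andbF.
rewrite (bigD1 (Ordinal (_ : t < n.+1))) //= [X in _ + X]big1 ?addn0 => [|a ne_at].
  rewrite /ncomp; apply: eq_bigr => g _; rewrite eqxx andbT; congr nat_of_bool.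
  by move: (\sum_(i < N) _) => s; rewrite -{1}(subnKC le_tn) eqn_add2l.
apply: big1 => g _; have -> : ((a : nat) == t) = false by apply: contraNF ne_at.
by rewrite andbF.
Qed.

(** * Reconstructing blocks from their sizes *)

Definition psum (s : nat -> nat) (j : nat) : nat := \sum_(i < j) s i.

Definition height (s : nat -> nat) (j : nat) : nat := psum s j - j.

Fixpoint last_below (h : nat -> nat) (v i : nat) : nat :=
  if i is i'.+1 then (if h i' < v then i' else last_below h v i') else 0.

Definition last_lower (h : nat -> nat) (j : nat) : nat := last_below h (h j) j.

(* Read [s j] as the size of the block opened at [j] ([0] if [j] opens no
   block); [x] then belongs to the last block opened before it that is not
   yet full, i.e. to the last index of smaller height. *)
Definition opener (s : nat -> nat) (x : nat) : nat :=
  if 0 < s x then x else last_lower (height s) x.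

Definition admissible (N : nat) (s : nat -> nat) : Prop :=
  [/\ forall j, N <= j -> s j = 0, forall j, j <= N -> j <= psum s j & psum s N = N].

Lemma psumS s j : psum s j.+1 = psum s j + s j.
Proof. by rewrite /psum big_ord_recr. Qed.

Lemma last_below_spec h v i : (exists2 p, p < i & h p < v) ->
  [/\ last_below h v i < i, h (last_below h v i) < v &
      forall q, last_below h v i < q < i -> v <= h q].
Proof.
elim: i => [[p]|i IHi [p ltpi ltpv]] //=.
case: ifP => lt_iv; first by split => // q; lia.
have ltpi' : p < i.
  by rewrite ltn_neqAle -ltnS ltpi andbT; apply: contraFN lt_iv => /eqP <-.
have [lt_li lt_lv ge_q] := IHi (ex_intro2 _ _ p ltpi' ltpv).
split; [lia | done | move=> q /andP[lt_lq lt_qi]].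
case: (ltngtP q i) lt_qi => [lt_qi _|gt_qi lt_qi|-> _]; last by rewrite leqNgt lt_iv.
  by apply: ge_q; rewrite lt_lq.
lia.
Qed.

Lemma last_lower_spec h j : (exists2 p, p < j & h p < h j) ->
  [/\ last_lower h j < j, h (last_lower h j) < h j &
      forall q, last_lower h j < q < j -> h j <= h q].
Proof. exact: last_below_spec. Qed.

Lemma last_lowerE h j p : p < j -> h p < h j ->
  (forall q, p < q < j -> h j <= h q) -> last_lower h j = p.
Proof.
move=> ltpj ltp ge_q; have [lt_lj lt_l ge_l] := last_lower_spec (ex_intro2 _ _ p ltpj ltp).
case: (ltngtP (last_lower h j) p) => // [lt_lp | lt_pl].
  by have := ge_l p; rewrite lt_lp ltpj => /(_ isT); lia.
by have := ge_q (last_lower h j); rewrite lt_pl lt_lj => /(_ isT); lia.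
Qed.

Lemma last_below_ext h h' v i : h =1 h' -> last_below h v i = last_below h' v i.
Proof. by move=> eq_h; elim: i => //= i ->; rewrite eq_h. Qed.

Lemma opener_ext s s' x : s =1 s' -> opener s x = opener s' x.
Proof.
move=> eq_s; have eq_h : height s =1 height s'.
  by move=> j; rewrite /height /psum; congr subn; apply: eq_bigr => i _.
by rewrite /opener eq_s /last_lower eq_h; case: ifP => // _; apply: last_below_ext.
Qed.

Lemma card_set_sum (T : finType) (p : pred T) : #|[set x | p x]| = \sum_x (p x : nat).
Proof. by rewrite -sum1dep_card big_mkcond /=; apply: eq_bigr => x _; case: (p x). Qed.

Lemma sum_card_fibers N (f : 'I_N -> nat) J :
  \sum_(j < J) #|[set x | f x == j]| = #|[set x | f x < J]|.
Proof.
rewrite card_set_sum (eq_bigr (fun j : 'I_J => \sum_x (f x == j : nat))) => [|j _].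
  rewrite exchange_big /=; apply: eq_bigr => x _.
  elim: J => [|J IHJ]; first by rewrite big_ord0.
  by rewrite big_ord_recr /= IHJ ltnS; case: (ltngtP (f x) J).
exact: card_set_sum.
Qed.

Section Openers.

Variables (N : nat) (s : nat -> nat).
Hypothesis adm : admissible N s.

Lemma opener_down x : x < N -> s x = 0 ->
  [/\ opener s x < x, height s (opener s x) < height s x &
      forall q, opener s x < q < x -> height s x <= height s q].
Proof.
have [s0 psum_ge psumN] := adm; move=> ltxN sx0; rewrite /opener sx0 /=.
apply: last_lower_spec; exists 0.
  case: x ltxN sx0 => // ltxN sx0.
  by have := psum_ge 1 ltxN; rewrite psumS /psum big_ord0 sx0.
by have := psum_ge x.+1 ltxN; rewrite psumS sx0 /height /psum big_ord0; lia.
Qed.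

Lemma opener_leq x : x < N -> opener s x <= x.
Proof.
move=> ltxN; case: (posnP (s x)) => [sx0|sx_gt0]; last by rewrite /opener sx_gt0.
by have [] := opener_down ltxN sx0; lia.
Qed.

Lemma opener_gt0 x : x < N -> 0 < s (opener s x).
Proof.
move=> ltxN; case: (posnP (s x)) => [sx0|sx_gt0]; last by rewrite /opener sx_gt0 sx_gt0.
have [_ psum_ge _] := adm; have [lt_px lt_h ge_h] := opener_down ltxN sx0.
set p := opener s x in lt_px lt_h ge_h *.
have le_h : height s x <= height s p.+1.
  by case: (ltngtP p.+1 x) => [lt|gt|->] //; [apply: ge_h; rewrite lt ltnSn | lia].
have := psum_ge p (ltnW (ltn_trans lt_px ltxN)).
by move: lt_h le_h; rewrite /height psumS; lia.
Qed.

Lemma opener_id x : x < N -> opener s (opener s x) = opener s x.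
Proof. by move=> ltxN; rewrite {1}/opener (opener_gt0 ltxN). Qed.

Lemma opener_lt x : x < N -> opener s x < N.
Proof. by move=> ltxN; apply: leq_ltn_trans (opener_leq ltxN) ltxN. Qed.

Lemma opener_fiber_height x p : x < N -> opener s x = p -> x != p ->
  [/\ s x = 0, p < x, height s p < height s x &
      height s x <= height s p + (s p - 1)].
Proof.
move=> ltxN opx ne_xp; have [_ psum_ge _] := adm.
have sx0 : s x = 0 by apply/eqP; apply: contraR ne_xp; rewrite -lt0n -opx /opener => ->.
have [lt_px lt_h ge_h] := opener_down ltxN sx0; rewrite opx in lt_px lt_h ge_h.
split => //; have -> : height s p + (s p - 1) = height s p.+1.
  have := opener_gt0 ltxN; rewrite opx.
  by have := psum_ge p (ltnW (ltn_trans lt_px ltxN)); rewrite /height psumS; lia.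
by case: (ltngtP p.+1 x) => [lt|gt|->] //; [apply: ge_h; rewrite lt ltnSn | lia].
Qed.

Lemma opener_fiber_height_decr x y p : x < N -> y < N ->
  opener s x = p -> opener s y = p -> x != p -> y != p ->
  x < y -> height s y < height s x.
Proof.
move=> ltxN ltyN opx opy ne_xp ne_yp lt_xy; have [_ psum_ge _] := adm.
have [sx0 lt_px lt_hx _] := opener_fiber_height ltxN opx ne_xp.
have [sy0 _ _ _] := opener_fiber_height ltyN opy ne_yp.
have [_ _ ge_h] := opener_down ltyN sy0; rewrite opy in ge_h.
have h_xS : height s x.+1 = height s x - 1.
  by have := psum_ge x.+1 ltxN; rewrite /height psumS sx0; lia.
have : height s y <= height s x.+1.
  by case: (ltngtP x.+1 y) => [lt|gt|->] //; [apply: ge_h; rewrite lt; lia | lia].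
lia.
Qed.

Lemma card_opener_fiber_leq p : p < N -> #|[set x : 'I_N | opener s x == p]| <= s p.
Proof.
move=> ltpN; set F := [set x : 'I_N | opener s x == p].
case: (posnP (s p)) => [sp0|sp_gt0].
  rewrite sp0 leqn0 cards_eq0; apply/eqP/setP => x; rewrite !inE.
  by apply/negbTE/eqP => opx; have := opener_gt0 (ltn_ord x); rewrite opx sp0.
rewrite (cardsD1 (Ordinal ltpN)); set D := F :\ Ordinal ltpN.
have memD x : x \in D -> opener s x = p /\ (x : nat) != p.
  by rewrite !inE -val_eqE /= => /andP[-> /eqP].
(* Heights on [D] are distinct and lie in an interval of length [s p - 1]. *)
have : size (map (fun x : 'I_N => height s x) (enum D)) <=
       size (iota (height s p).+1 (s p - 1)).
  apply: uniq_leq_size.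
    rewrite map_inj_in_uniq ?enum_uniq // => x y; rewrite !mem_enum.
    move=> /memD [opx ne_xp] /memD [opy ne_yp] eq_h; apply: val_inj.
    case: (ltngtP x y) => // [lt_xy|lt_yx].
      by have := opener_fiber_height_decr (ltn_ord x) (ltn_ord y) opx opy ne_xp ne_yp lt_xy; lia.
    by have := opener_fiber_height_decr (ltn_ord y) (ltn_ord x) opy opx ne_yp ne_xp lt_yx; lia.
  move=> v /mapP [x]; rewrite mem_enum => /memD [opx ne_xp] ->; rewrite mem_iota.
  by have [] := opener_fiber_height (ltn_ord x) opx ne_xp; lia.
rewrite size_map size_iota -cardE.
by case: (_ \in F); lia.
Qed.

Lemma card_opener_fiber p : p < N -> #|[set x : 'I_N | opener s x == p]| = s p.
Proof.
move=> ltpN; have [_ _ psumN] := adm.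
have sum_fibers : \sum_(q < N) #|[set x : 'I_N | opener s x == q]| = \sum_(q < N) s q.
  rewrite (sum_card_fibers (fun x : 'I_N => opener s x)) -/(psum s N) psumN.
  rewrite -[RHS](card_ord N) -cardsT; apply: eq_card => x; rewrite !inE.
  exact: opener_lt.
have := @leqif_sum _ xpredT (fun q : 'I_N => #|[set x : 'I_N | opener s x == q]| == s q)
  (fun q : 'I_N => #|[set x : 'I_N | opener s x == q]|) (fun q : 'I_N => s q).
case=> [q _|_]; first by apply: leqif_eq; apply: card_opener_fiber_leq.
by rewrite sum_fibers eqxx => /esym/forallP/(_ (Ordinal ltpN))/eqP.
Qed.

(* This is where non-crossingness comes from. *)
Lemma opener_nested x y : x < N -> y < N -> opener s x != x ->
  opener s x < y < x -> opener s y != opener s x -> opener s x < opener s y.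
Proof.
move=> ltxN ltyN ne_px /andP[lt_py lt_yx] ne_op.
have sx0 : s x = 0 by apply/eqP; apply: contraR ne_px; rewrite -lt0n /opener => ->.
have [_ _ ge_hx] := opener_down ltxN sx0.
case: (posnP (s y)) => [sy0|sy_gt0]; last by rewrite {2}/opener sy_gt0.
have [_ lt_hy ge_hy] := opener_down ltyN sy0.
case: (ltngtP (opener s x) (opener s y)) => // [lt_yp|eq_op]; last by rewrite eq_op eqxx in ne_op.
have : height s y <= height s (opener s x) by apply: ge_hy; rewrite lt_yp lt_py.
have : height s x <= height s y by apply: ge_hx; rewrite lt_py lt_yx.
have := opener_down ltxN sx0; case=> _ lt_hx _; lia.
Qed.

End Openers.

Section BlockMinima.

Variables (N : nat) (P : {set {set 'I_N}}).
Hypothesis partP : partition P [set: 'I_N].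

Definition bmin (x : 'I_N) : 'I_N :=
  arg_min x (fun y => y \in pblock P x) (fun y : 'I_N => (y : nat)).

Lemma part_cover x : x \in cover P.
Proof. by case/and3P: partP => /eqP -> _ _; rewrite inE. Qed.

Lemma part_trivIset : trivIset P.
Proof. by case/and3P: partP. Qed.

Lemma mem_pblock_self x : x \in pblock P x.
Proof. by rewrite mem_pblock part_cover. Qed.

Lemma pblock_mem_part x : pblock P x \in P.
Proof. exact/pblock_mem/part_cover. Qed.

Lemma pblock_of_mem B x : B \in P -> x \in B -> pblock P x = B.
Proof. exact: def_pblock part_trivIset. Qed.

Lemma eq_pblock_mem x y : (pblock P x == pblock P y) = (y \in pblock P x).
Proof. by rewrite eq_pblock ?part_trivIset ?part_cover. Qed.

Lemma bmin_in x : bmin x \in pblock P x.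
Proof. by rewrite /bmin; case: arg_minnP => //; apply: mem_pblock_self. Qed.

Lemma bmin_leq x y : y \in pblock P x -> bmin x <= y.
Proof.
by rewrite /bmin; case: arg_minnP => [|m _ min_m]; [apply: mem_pblock_self | apply: min_m].
Qed.

Lemma bmin_leq_self x : bmin x <= x.
Proof. exact/bmin_leq/mem_pblock_self. Qed.

Lemma bminE x z : z \in pblock P x -> (forall y, y \in pblock P x -> z <= y) -> bmin x = z.
Proof.
move=> zPx min_z; apply/val_inj/eqP; rewrite eqn_leq bmin_leq //=.
exact/min_z/bmin_in.
Qed.

Lemma pblock_bmin x : pblock P (bmin x) = pblock P x.
Proof. exact/same_pblock/bmin_in/part_trivIset. Qed.

Lemma eq_bmin x y : (bmin x == bmin y) = (pblock P x == pblock P y).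
Proof.
apply/eqP/eqP => [eq_m|eq_b]; first by rewrite -pblock_bmin eq_m pblock_bmin.
by apply: bminE => [|z]; rewrite eq_b; [apply: bmin_in | apply: bmin_leq].
Qed.

Lemma bmin_id x : bmin (bmin x) = bmin x.
Proof. by apply/eqP; rewrite eq_bmin pblock_bmin. Qed.

End BlockMinima.

Definition bsize N (P : {set {set 'I_N}}) (j : nat) : nat :=
  #|[set x : 'I_N | bmin P x == j :> nat]|.

Lemma card_ord_ltn N j : j <= N -> #|[set x : 'I_N | x < j]| = j.
Proof.
move=> le_jN; rewrite (card_set_sum (fun x : 'I_N => (x : nat) < j)) -big_mkcond /=.
by rewrite -(big_ord_widen _ (fun _ => 1) le_jN) sum_nat_const card_ord muln1.
Qed.

Lemma psum_bsize N (P : {set {set 'I_N}}) j :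
  psum (bsize P) j = #|[set x : 'I_N | bmin P x < j]|.
Proof. exact: (sum_card_fibers (fun x : 'I_N => (bmin P x : nat))). Qed.

Section BlockSizes.

Variables (N : nat) (P : {set {set 'I_N}}).
Hypothesis partP : partition P [set: 'I_N].

Lemma bsizeE (x : 'I_N) : bsize P x = if bmin P x == x then #|pblock P x| else 0.
Proof.
rewrite /bsize; case: ifP => [/eqP eq_mx|ne_mx].
  apply: eq_card => y; rewrite inE -{1}eq_mx val_eqE eq_bmin //.
  by rewrite eq_sym eq_pblock_mem.
apply/eqP; rewrite cards_eq0; apply/eqP/setP => y; rewrite !inE.
apply/negbTE/eqP => eq_my; have eq_my' : bmin P y = x by apply: val_inj.
by move: ne_mx; rewrite -eq_my' bmin_id // eqxx.
Qed.

Lemma height_bsize j : j <= N ->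
  height (bsize P) j = #|[set x : 'I_N | (j <= x) && (bmin P x < j)]|.
Proof.
move=> le_jN; rewrite /height psum_bsize -{2}(card_ord_ltn le_jN) !card_set_sum.
suff -> : \sum_(x : 'I_N) ((bmin P x < j) : nat) =
    \sum_(x : 'I_N) (((x : nat) < j) : nat) +
    \sum_(x : 'I_N) (((j <= x) && (bmin P x < j)) : nat) by rewrite addKn.
rewrite -big_split /=; apply: eq_bigr => x _.
have := bmin_leq_self partP x; case: (ltnP x j) => [lt_xj le_mx|_ _] /=.
  by rewrite (leq_ltn_trans le_mx lt_xj).
by rewrite add0n.
Qed.

Lemma admissible_bsize : admissible N (bsize P).
Proof.
split.
- move=> j le_Nj; apply/eqP; rewrite cards_eq0; apply/eqP/setP => x; rewrite !inE.
  by apply/negbTE/eqP => eq_mj; have := ltn_ord (bmin P x); lia.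
- move=> j le_jN; rewrite psum_bsize -{1}(card_ord_ltn le_jN); apply: subset_leq_card.
  by apply/subsetP => x; rewrite !inE; apply: leq_ltn_trans (bmin_leq_self partP x).
- rewrite psum_bsize -[RHS](card_ord N) -cardsT; apply: eq_card => x.
  by rewrite !inE ltn_ord.
Qed.

Lemma card_pblock_bsize (x : 'I_N) : #|pblock P x| = bsize P (bmin P x).
Proof. by rewrite bsizeE // bmin_id // eqxx pblock_bmin. Qed.

Lemma nblocks_of_size_bsize m : 0 < m ->
  nblocks_of_size m P = \sum_(x : 'I_N) (bsize P x == m).
Proof.
move=> m_gt0; rewrite -card_set_sum /nblocks_of_size.
set A := [set x : 'I_N | bsize P x == m].
have memA x : x \in A -> bmin P x = x /\ #|pblock P x| = m.
  rewrite inE bsizeE //; case: ifP => [/eqP -> /eqP //|_ /eqP m0].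
  by rewrite -m0 in m_gt0.
have -> : [set B in P | #|B| == m] = [set pblock P x | x in A].
  apply/setP => B; rewrite inE; apply/andP/imsetP => [[BP /eqP card_B]|[x /memA [_ card_x] ->]].
    have /set0Pn [x xB] : B != set0 by rewrite -card_gt0 card_B.
    exists (bmin P x); last by rewrite pblock_bmin // (pblock_of_mem partP BP xB).
    by rewrite inE bsizeE // bmin_id // eqxx pblock_bmin // (pblock_of_mem partP BP xB) card_B.
  by rewrite pblock_mem_part // card_x.
rewrite card_in_imset // => x y /memA [mx _] /memA [my _] eq_b.
by rewrite -mx -my; apply/eqP; rewrite eq_bmin // eq_b.
Qed.

Hypothesis ncP : noncrossing P.

Lemma noncrossing_pblock (a b c d : 'I_N) : a < b -> b < c -> c < d ->
  pblock P a = pblock P c -> pblock P b = pblock P d -> pblock P a = pblock P b.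
Proof.
move=> lt_ab lt_bc lt_cd eq_ac eq_bd; apply/eqP; apply: contraT => ne_ab.
move: ncP => /forall_inP /(_ _ (pblock_mem_part partP a)).
move=> /forall_inP /(_ _ (pblock_mem_part partP b)) /implyP /(_ ne_ab).
move=> /forallP /(_ a) /forallP /(_ b) /forallP /(_ c) /forallP /(_ d).
have cPa : c \in pblock P a by rewrite eq_ac mem_pblock_self.
have dPb : d \in pblock P b by rewrite eq_bd mem_pblock_self.
by rewrite lt_ab lt_bc lt_cd cPa dPb !mem_pblock_self.
Qed.

Lemma noncrossing_bmin (a b c d : 'I_N) : a < b -> b < c -> c < d ->
  bmin P a = bmin P c -> bmin P b = bmin P d -> bmin P a = bmin P b.
Proof.
move=> lt_ab lt_bc lt_cd /eqP eq_ac /eqP eq_bd; apply/eqP.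
rewrite !eq_bmin // in eq_ac eq_bd *.
by apply/eqP/(noncrossing_pblock lt_ab lt_bc lt_cd); apply/eqP.
Qed.

Lemma height_bsize_bmin_lt (x : 'I_N) : bmin P x != x ->
  height (bsize P) (bmin P x) < height (bsize P) x.
Proof.
set p := bmin P x => ne_px; have le_px := bmin_leq_self partP x.
have lt_px : p < x by rewrite ltn_neqAle le_px andbT; apply: contra ne_px => /eqP/val_inj ->.
rewrite !height_bsize ?(ltnW (ltn_ord p)) ?(ltnW (ltn_ord x)) //.
apply: proper_card; apply/properP; split.
  apply/subsetP => y; rewrite !inE => /andP[le_py lt_myp].
  rewrite (ltn_trans lt_myp lt_px) andbT leqNgt; apply/negP => lt_yx.
  have lt_py : p < y.
    rewrite ltn_neqAle le_py andbT; apply: contraTneq lt_myp => /val_inj <-.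
    by rewrite bmin_id // ltnn.
  have := noncrossing_bmin lt_myp lt_py lt_yx (bmin_id partP y) (bmin_id partP x).
  rewrite bmin_id // => eq_myp.
  by move: lt_myp; rewrite eq_myp /p bmin_id // ltnn.
by exists x; rewrite !inE ?ltnn ?andbF // leqnn.
Qed.

Lemma height_bsize_between (x : 'I_N) q : bmin P x < q < x ->
  height (bsize P) x <= height (bsize P) q.
Proof.
move=> /andP[lt_pq lt_qx]; set p := bmin P x in lt_pq.
have lt_qN : q < N := ltn_trans lt_qx (ltn_ord x).
rewrite !height_bsize ?(ltnW lt_qN) ?(ltnW (ltn_ord x)) //; apply: subset_leq_card.
apply/subsetP => y; rewrite !inE => /andP[le_xy lt_myx].
rewrite (leq_trans (ltnW lt_qx) le_xy) ltnNge; apply/negP => le_qmy.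
have lt_xy : x < y.
  rewrite ltn_neqAle le_xy andbT; apply: contraTneq le_qmy => /val_inj <-.
  by rewrite -ltnNge.
have := noncrossing_bmin (leq_trans lt_pq le_qmy) lt_myx lt_xy (bmin_id partP x) (bmin_id partP y).
by rewrite !bmin_id // => eq_p; move: lt_pq le_qmy; rewrite /p eq_p; lia.
Qed.

Lemma opener_bsize (x : 'I_N) : opener (bsize P) x = bmin P x.
Proof.
case: (eqVneq (bmin P x) x) => [eq_mx|ne_mx].
  have pblock_gt0 : 0 < #|pblock P x| by apply/card_gt0P; exists x; apply: mem_pblock_self.
  by rewrite /opener bsizeE // eq_mx eqxx pblock_gt0.
have lt_mx : bmin P x < x.
  by rewrite ltn_neqAle bmin_leq_self // andbT; apply: contra ne_mx => /eqP/val_inj ->.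
rewrite /opener bsizeE // (negbTE ne_mx) /=.
by apply: last_lowerE => //; [apply: height_bsize_bmin_lt | apply: height_bsize_between].
Qed.

End BlockSizes.

Definition seq_partition N (s : nat -> nat) : {set {set 'I_N}} :=
  preim_partition (fun x : 'I_N => opener s x) [set: 'I_N].

Lemma eq_preim_partition (T : finType) (rT1 rT2 : eqType) (f : T -> rT1) (g : T -> rT2) D :
  (forall x y, (f x == f y) = (g x == g y)) -> preim_partition f D = preim_partition g D.
Proof.
move=> eq_fg; rewrite /preim_partition /equivalence_partition; apply: eq_imset => x.
by apply/setP => y; rewrite !inE eq_fg.
Qed.

Lemma eq_seq_partition N s s' : s =1 s' -> seq_partition N s = seq_partition N s'.
Proof. by move=> eq_s; apply: eq_preim_partition => x y; rewrite !(opener_ext _ eq_s). Qed.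

Lemma seq_partitionP N s : partition (seq_partition N s) [set: 'I_N].
Proof. exact: preim_partitionP. Qed.

Lemma mem_pblock_seq_partition N s (x y : 'I_N) :
  (y \in pblock (seq_partition N s) x) = (opener s x == opener s y).
Proof.
apply: (@pblock_equivalence_partition _ (fun x y : 'I_N => opener s x == opener s y)) => //.
by move=> a b c _ _ _; split => // /eqP ->.
Qed.

Lemma seq_partition_bsize N (P : {set {set 'I_N}}) :
  partition P [set: 'I_N] -> noncrossing P -> seq_partition N (bsize P) = P.
Proof.
move=> partP ncP; rewrite /seq_partition -[RHS](preim_partition_pblock partP).
by apply: eq_preim_partition => x y; rewrite !opener_bsize // val_eqE eq_bmin.
Qed.

Section SeqPartition.

Variables (N : nat) (s : nat -> nat).
Hypothesis adm : admissible N s.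

Lemma bmin_seq_partition (x : 'I_N) : bmin (seq_partition N s) x = opener s x :> nat.
Proof.
rewrite (@bminE _ _ (seq_partitionP N s) x (Ordinal (opener_lt adm (ltn_ord x)))) //.
  by rewrite mem_pblock_seq_partition /= (opener_id adm (ltn_ord x)).
by move=> y; rewrite mem_pblock_seq_partition /= => /eqP ->; apply: (opener_leq adm (ltn_ord y)).
Qed.

Lemma bsize_seq_partition j : bsize (seq_partition N s) j = s j.
Proof.
have [s0 _ _] := adm; rewrite /bsize.
under eq_finset do rewrite bmin_seq_partition.
case: (ltnP j N) => [ltjN|le_Nj]; first exact: card_opener_fiber.
rewrite s0 //; apply/eqP; rewrite cards_eq0; apply/eqP/setP => x; rewrite !inE.
by apply/negbTE/eqP => opx; have := opener_lt adm (ltn_ord x); lia.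
Qed.

Lemma seq_partition_noncrossing : noncrossing (seq_partition N s).
Proof.
apply/forall_inP => B1 B1P; apply/forall_inP => B2 B2P; apply/implyP => ne_B.
apply/forallP => a; apply/forallP => b; apply/forallP => c; apply/forallP => d.
apply/negP => /and5P [lt_ab lt_bc lt_cd aB1 /and3P[cB1 bB2 dB2]].
have partS := seq_partitionP N s.
have opac : opener s a = opener s c.
  by apply/eqP; rewrite -mem_pblock_seq_partition (pblock_of_mem partS B1P aB1).
have opbd : opener s b = opener s d.
  by apply/eqP; rewrite -mem_pblock_seq_partition (pblock_of_mem partS B2P bB2).
have ne_opab : opener s a != opener s b.
  apply: contra ne_B; rewrite -mem_pblock_seq_partition (pblock_of_mem partS B1P aB1) => bB1.
  by rewrite -(pblock_of_mem partS B1P bB1) (pblock_of_mem partS B2P bB2).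
have le_a := opener_leq adm (ltn_ord a); have le_b := opener_leq adm (ltn_ord b).
have lt_cb : opener s c < opener s b.
  apply: (opener_nested adm (ltn_ord c) (ltn_ord b)); rewrite -?opac //.
  - by apply/eqP => eq_c; lia.
  - by apply/andP; split; lia.
  by rewrite eq_sym.
have lt_dc : opener s d < opener s c.
  apply: (opener_nested adm (ltn_ord d) (ltn_ord c)); rewrite -?opbd //.
  - by apply/eqP => eq_d; lia.
  - by apply/andP; split; lia.
  by rewrite -opac.
lia.
Qed.

End SeqPartition.

(** * Coding [NC^k(n)] by ballot sequences *)

Section Coding.

Variables (k n : nat).
Hypothesis k_gt0 : 0 < k.

Local Notation code_t := {ffun 'I_(k * n).+1 -> 'I_n.+1}.
Implicit Types (c : code_t) (P : {set {set 'I_(k * n)}}).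

(* [c i] is the size of the block opened at [i], divided by [k]; the last
   entry is a dummy [0] that makes room for the [k n + 1] rotations. *)
Definition code P : code_t := [ffun i : 'I_(k * n).+1 => inord (bsize P i %/ k)].

Definition code_sizes c (j : nat) : nat := if j < k * n then k * c (inord j) else 0.

Definition decode c : {set {set 'I_(k * n)}} := seq_partition (k * n) (code_sizes c).

Lemma prefix_weightE c m : m <= (k * n).+1 ->
  prefix_weight k c m = \sum_(i < m) k * c (inord i).
Proof.
move=> le_m; rewrite /prefix_weight (eq_bigr (fun i : 'I_(k * n).+1 => k * c (inord i))).
  by rewrite -(big_ord_widen _ (fun i => k * c (inord i)) le_m).
by move=> i _; rewrite inord_val.
Qed.

Lemma psum_code_sizes c j : j <= k * n -> psum (code_sizes c) j = prefix_weight k c j.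
Proof.
move=> le_j; rewrite prefix_weightE 1?leqW //.
by apply: eq_bigr => i _; rewrite /code_sizes (leq_trans (ltn_ord i) le_j).
Qed.

Lemma admissible_code_sizes c : total c = n -> ballot k c ->
  admissible (k * n) (code_sizes c) /\ c ord_max = 0 :> nat.
Proof.
move=> tot_c /forallP ballot_c.
have tot : prefix_weight k c (k * n).+1 = k * n.
  rewrite /prefix_weight (eq_bigl xpredT) => [|i]; last by rewrite ltn_ord.
  by rewrite -big_distrr /= -/(total c) tot_c.
have split_last : prefix_weight k c (k * n).+1 = prefix_weight k c (k * n) + k * c ord_max.
  rewrite !prefix_weightE // big_ord_recr /=; congr (_ + k * (c _ : nat)).
  by apply: val_inj; rewrite /= inordK.
have pw_kn : prefix_weight k c (k * n) = k * n.
  apply/eqP; rewrite eqn_leq (ballot_c ord_max) andbT.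
  by rewrite -[leqRHS]tot split_last leq_addr.
have c_max : c ord_max = 0 :> nat.
  apply/eqP; rewrite -(eqn_pmul2l k_gt0) muln0 -(eqn_add2l (k * n)) addn0.
  by rewrite -{1}pw_kn -split_last tot.
split => //; split.
- by move=> j le_j; rewrite /code_sizes ltnNge le_j.
- move=> j le_j; rewrite psum_code_sizes //.
  by have := ballot_c (inord j); rewrite inordK.
- by rewrite psum_code_sizes.
Qed.

Lemma code_decode c : total c = n -> ballot k c -> code (decode c) = c.
Proof.
move=> tot_c ballot_c; have [adm c_max] := admissible_code_sizes tot_c ballot_c.
apply/ffunP => i; rewrite ffunE /decode bsize_seq_partition //; apply: val_inj => /=.
rewrite /code_sizes; case: ifP => lt_i.
  by rewrite mulKn // inordK ?inord_val // ltn_ord.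
have -> : i = ord_max by apply: val_inj; have := ltn_ord i; move: lt_i; rewrite /= ltnS; lia.
by rewrite div0n inordK // c_max.
Qed.

Lemma decode_NCk c : total c = n -> ballot k c -> decode c \in NCk k n.
Proof.
move=> tot_c ballot_c; have [adm _] := admissible_code_sizes tot_c ballot_c.
have partD := seq_partitionP (k * n) (code_sizes c).
rewrite inE; apply/and3P; split; [exact: partD | exact: seq_partition_noncrossing |].
apply/forall_inP => B BD; have /set0Pn [x xB] := partition_neq0 partD BD.
rewrite -(pblock_of_mem partD BD xB) card_pblock_bsize // bsize_seq_partition //.
by rewrite /code_sizes; case: ifP; rewrite ?dvdn_mulr ?dvdn0.
Qed.

Section CodeOfPartition.

Variable P : {set {set 'I_(k * n)}}.
Hypothesis NCkP : P \in NCk k n.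

Lemma NCk_partition : partition P [set: 'I_(k * n)].
Proof. by move: NCkP; rewrite inE => /and3P[]. Qed.

Lemma NCk_noncrossing : noncrossing P.
Proof. by move: NCkP; rewrite inE => /and3P[]. Qed.

Lemma dvdn_bsize j : k %| bsize P j.
Proof.
have partP := NCk_partition; move: NCkP; rewrite inE => /and3P[_ _ /forall_inP dvd_k].
case: (posnP (bsize P j)) => [->|]; first exact: dvdn0.
rewrite card_gt0 => /set0Pn [x]; rewrite inE => /eqP mx_j.
by rewrite -mx_j -card_pblock_bsize //; apply/dvd_k/pblock_mem_part.
Qed.

Lemma code_val (i : 'I_(k * n).+1) : k * code P i = bsize P i.
Proof.
rewrite ffunE inordK; first by rewrite mulnC divnK ?dvdn_bsize.
by rewrite ltnS leq_divLR ?dvdn_bsize // (leq_trans (max_card _)) // card_ord mulnC.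
Qed.

Lemma code_sizes_code j : code_sizes (code P) j = bsize P j.
Proof.
rewrite /code_sizes; case: ifP => lt_j; first by rewrite code_val inordK // ltnW.
have [s0 _ _] := admissible_bsize NCk_partition.
by rewrite s0 // leqNgt lt_j.
Qed.

Lemma decode_code : decode (code P) = P.
Proof.
rewrite /decode (eq_seq_partition _ code_sizes_code).
exact: seq_partition_bsize NCk_partition NCk_noncrossing.
Qed.

Lemma total_code : total (code P) = n.
Proof.
have [s0 _ psum_kn] := admissible_bsize NCk_partition.
apply/eqP; rewrite -(eqn_pmul2l k_gt0) /total big_distrr big_ord_recr /=.
under eq_bigr do rewrite code_val.
by rewrite code_val s0 // addn0; apply/eqP; exact: psum_kn.
Qed.

Lemma ballot_code : ballot k (code P).
Proof.
have [_ psum_ge _] := admissible_bsize NCk_partition.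
apply/forallP => m; have le_m : m <= k * n by rewrite -ltnS.
rewrite -psum_code_sizes // /psum; under eq_bigr do rewrite code_sizes_code.
exact: psum_ge.
Qed.

Lemma nblocks_code t : 0 < t -> nblocks_of_size (t * k) P = nentries t (code P).
Proof.
move=> t_gt0; have partP := NCk_partition.
have code_max : code P ord_max = 0 :> nat.
  have [s0 _ _] := admissible_bsize partP.
  by apply/eqP; rewrite -(eqn_pmul2l k_gt0) muln0 code_val s0.
rewrite nblocks_of_size_bsize ?muln_gt0 ?t_gt0 // /nentries big_ord_recr /=.
rewrite code_max (ltn_eqF t_gt0) addn0; apply: eq_bigr => i _.
by rewrite -[bsize P _](code_val (widen_ord (leqnSn _) i)) [t * k]mulnC eqn_pmul2l.
Qed.

End CodeOfPartition.

Lemma sum_NCk (F : code_t -> nat) :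
  \sum_(c | (total c == n) && ballot k c) F c = \sum_(P in NCk k n) F (code P).
Proof.
rewrite (reindex_onto code decode) /= => [|c /andP[/eqP tot_c ballot_c]]; last first.
  exact: code_decode.
apply: eq_bigl => P; apply/andP/idP => [[/andP[/eqP tot_c ballot_c] /eqP <-]|NCkP].
  exact: decode_NCk.
by rewrite total_code // eqxx ballot_code // decode_code.
Qed.

Lemma card_NCk : (k * n).+1 * #|NCk k n| = 'C(n + k * n, n).
Proof.
rewrite -sum1_card -(sum_NCk (fun=> 1)) (sum_ballot (F := fun=> 1)) //.
by rewrite -(@ncomp_bin n.+1) // /ncomp big_mkcond.
Qed.

Lemma sum_nblocks t : 0 < t ->
  (k * n).+1 * \sum_(P in NCk k n) nblocks_of_size (t * k) P =
  (k * n).+1 * if t <= n then ncomp n.+1 (k * n) (n - t) else 0.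
Proof.
move=> t_gt0; rewrite (eq_bigr (fun P => nentries t (code P))) => [|P NCkP]; last first.
  exact: nblocks_code.
rewrite -sum_NCk (sum_ballot (F := nentries t)) ?sum_nentries ?sum_head_eq //.
exact: nentries_rotf.
Qed.

End Coding.

Local Open Scope ring_scope.

Lemma binomZ_ncomp k n t : (0 < k)%N -> (0 < n)%N -> (0 < t)%N ->
  binomZ ((n * (k + 1))%:Z - t%:Z - 1) ((n * k)%:Z - 1) =
  if (t <= n)%N then ncomp n.+1 (k * n) (n - t) else 0%N.
Proof.
move=> k_gt0 n_gt0 t_gt0; have kn_gt0 : (0 < k * n)%N by rewrite muln_gt0 k_gt0.
rewrite /binomZ; case: (leqP t n) => [le_tn|lt_nt]; last first.
  by rewrite [X in _ && X](_ : _ = false) ?andbF //; apply/negbTE; rewrite -ltNge; lia.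
have -> : (n * (k + 1))%:Z - t%:Z - 1 = (n * k + n - t - 1)%N%:Z by lia.
have -> : (n * k)%:Z - 1 = (n * k - 1)%N%:Z by lia.
rewrite lez_nat leq_sub2r ?leq_sub2l //=; last by lia.
rewrite -(prednK kn_gt0) ncomp_bin ?ltnS ?leq_subr // -bin_sub; last lia.
congr 'C(_, _); lia.
Qed.

Theorem corollary2p2 (k n t : nat) (hk : (0 < k)%N) (hn : (0 < n)%N)
    (ht : (0 < t)%N) :
  (\sum_(P in NCk k n) (nblocks_of_size (t * k) P)%:R) / (#|NCk k n|%:R : rat)
  = ((n * k + 1)%:R * (binomZ ((n * (k + 1))%:Z - t%:Z - 1) ((n * k)%:Z - 1))%:R)
    / ('C((k + 1) * n, n))%:R.
Proof.
have sum_eq : (\sum_(P in NCk k n) nblocks_of_size (t * k) P)%N =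
    binomZ ((n * (k + 1))%:Z - t%:Z - 1) ((n * k)%:Z - 1).
  by apply/eqP; rewrite -(eqn_pmul2l (ltn0Sn (k * n))) binomZ_ncomp // sum_nblocks.
have card_eq : 'C((k + 1) * n, n) = ((k * n).+1 * #|NCk k n|)%N.
  by rewrite card_NCk // mulnDl mul1n addnC.
have -> : (n * k + 1 = (k * n).+1)%N by rewrite addn1 mulnC.
rewrite -natr_sum sum_eq card_eq natrM invfM mulrACA divff ?mul1r //.
by rewrite pnatr_eq0.
Qed.
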